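(* Let $W\in\mathbb{R}^{d\times d}$ be symmetric positive semidefinite with $\mathrm{tr}(W)=1$, $\sum_{i,j}|W_{ij}|\le k$, and $\mathrm{rank}(W)=r$. Then $\sum_{i=1}^d\sqrt{W_{ii}}\le\sqrt{rk}$. *)

From mathcomp Require Import all_boot all_order all_algebra.
From mathcomp Require Import reals.
Set Implicit Arguments. Unset Strict Implicit. Unset Printing Implicit Defensive.
Import Order.TTheory GRing.Theory Num.Theory.
Local Open Scope ring_scope.

Definition psd {R : realType} {d : nat} (W : 'M[R]_d) : Prop :=
  W^T = W /\ forall x : 'cV[R]_d, 0 <= (x^T *m W *m x) ord0 ord0.

From mathcomp Require Import all_boot all_order all_algebra.
From mathcomp Require Import reals.
From mathcomp Require Import ring lra.
Import Order.TTheory GRing.Theory Num.Theory.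
Local Open Scope ring_scope.

(* Rescale W by D = diag (W_ii^(-1/4)). The balanced matrix A = D W D has trace
   sum_i sqrt W_ii and rank at most r, and since W is positive semidefinite,
   W_ij^2 <= W_ii W_jj gives A_ij^2 = W_ij^2 / sqrt (W_ii W_jj) <= |W_ij|, so
   sum_ij A_ij^2 <= k. For any square A, tr A = tr (A P) with P the orthogonal
   projector onto the row space of A, and sum_ij P_ij^2 = tr P = rank A; by
   Cauchy-Schwarz (tr A)^2 <= rank A * sum_ij A_ij^2 <= r k. *)

Lemma sqr_sum_mul_le {R : realFieldType} {I : finType} (x y : I -> R) :
  (\sum_i x i * y i) ^+ 2 <= (\sum_i x i ^+ 2) * (\sum_i y i ^+ 2).
Proof.
set A := \sum_i x i ^+ 2; set B := \sum_i x i * y i; set C := \sum_i y i ^+ 2.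
have lagrange : \sum_i \sum_j (x i * y j - x j * y i) ^+ 2 = 2 * (A * C - B ^+ 2).
  have row_sum i : \sum_j (x i * y j - x j * y i) ^+ 2 =
      x i ^+ 2 * C + y i ^+ 2 * A - 2 * (x i * y i) * B.
    rewrite /A /B /C !mulr_sumr -!sumrN -!big_split /=.
    by apply: eq_bigr => j _; ring.
  under eq_bigr do rewrite row_sum.
  rewrite sumrB !big_split /= -!mulr_suml -[\sum_i 2 * _]mulr_sumr -/A -/B -/C.
  ring.
have : 0 <= \sum_i \sum_j (x i * y j - x j * y i) ^+ 2.
  by apply: sumr_ge0 => i _; apply: sumr_ge0 => j _; apply: sqr_ge0.
by rewrite lagrange pmulr_rge0 // subr_ge0.
Qed.

Lemma row_free_gram_unitmx {R : realFieldType} {m n} (B : 'M[R]_(m, n)) :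
  row_free B -> B *m B^T \in unitmx.
Proof.
move=> freeB; rewrite -row_free_unit; apply: inj_row_free => v vBBt0.
have isotropic0 (w : 'rV[R]_n) : w *m w^T = 0 -> w = 0.
  move/matrixP/(_ 0 0); rewrite !mxE => /eqP.
  rewrite psumr_eq0 => [/allP sq0|j _]; last by rewrite mxE; apply: sqr_ge0.
  apply/rowP => j; apply/eqP; rewrite mxE -sqrf_eq0 expr2.
  by have := sq0 j (mem_index_enum j); rewrite mxE.
apply/eqP; rewrite -(mulmx_free_eq0 _ freeB); apply/eqP/isotropic0.
by rewrite trmx_mul mulmxA -(mulmxA v) vBBt0 mul0mx.
Qed.

Lemma row_free_orthogonal_projector {R : realFieldType} {r n} {B : 'M[R]_(r, n)} :
  row_free B -> exists P : 'M[R]_n, [/\ P^T = P, P *m P = P, B *m P = B & \tr P = r%:R].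
Proof.
move=> freeB; pose G := B *m B^T.
have Gu : G \in unitmx by apply: row_free_gram_unitmx.
have GT : G^T = G by rewrite /G trmx_mul trmxK.
exists (B^T *m invmx G *m B); split.
- by rewrite !trmx_mul trmxK trmx_inv GT mulmxA.
- by rewrite -!mulmxA (mulmxA B) -/G (mulmxA (invmx G)) mulVmx // mul1mx.
- by rewrite !mulmxA -/G mulmxV // mul1mx.
- by rewrite mxtrace_mulC mulmxA -/G mulmxV // mxtrace1.
Qed.

Lemma sqr_mxtrace_le_rank {R : realFieldType} {n} (A : 'M[R]_n) :
  (\tr A) ^+ 2 <= (\rank A)%:R * \sum_i \sum_j A i j ^+ 2.
Proof.
have [P [PT PP BP <-]] := row_free_orthogonal_projector (row_base_free A).
have AP : A *m P = A.
  have /submxP[D ->] : (A <= row_base A)%MS by rewrite eq_row_base.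
  by rewrite -mulmxA BP.
have trA : \tr A = \sum_i \sum_j A i j * P j i.
  by rewrite -{1}AP; apply: eq_bigr => i _; rewrite mxE.
have trP : \tr P = \sum_i \sum_j P j i ^+ 2.
  rewrite -{1}PP; apply: eq_bigr => i _; rewrite mxE; apply: eq_bigr => j _.
  by rewrite -{1}PT mxE expr2.
by rewrite trA trP !pair_bigA /= mulrC; apply: sqr_sum_mul_le.
Qed.

Lemma quad_form_delta2 {R : comNzRingType} {n} (W : 'M[R]_n) (i j : 'I_n) (u v : R) :
  let x := u *: delta_mx i 0 + v *: delta_mx j 0 : 'cV_n in
  (x^T *m W *m x) 0 0 = u ^+ 2 * W i i + u * v * (W i j + W j i) + v ^+ 2 * W j j.
Proof.
have entry p q : (delta_mx p 0)^T *m W *m delta_mx q 0 = (W p q)%:M :> 'M_1.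
  by rewrite trmx_delta -rowE -colE; apply/matrixP => a b; rewrite !ord1 !mxE.
move=> x; rewrite /x !linearD /= !linearZ /= !mulmxDl -!scalemxAl !entry !mxE eqxx !mulr1n.
ring.
Qed.

Lemma binary_form_ge0_sqr_le {R : realFieldType} (a b c : R) :
  (forall u v, 0 <= u ^+ 2 * a + u * v * (b + b) + v ^+ 2 * c) -> b ^+ 2 <= a * c.
Proof.
move=> form_ge0; have : 0 <= a by have := form_ge0 1 0; lra.
rewrite le_eqVlt => /orP[/eqP a0 | a_gt0].
  (* For a = 0 the form is affine in u, so it can only stay nonnegative if b = 0. *)
  have [->|b_neq0] := eqVneq b 0; first by rewrite expr0n -a0 mul0r.
  have := form_ge0 (- (c + 1) / (b + b)) 1; rewrite -a0 mulr0 add0r mulr1 expr1n mul1r.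
  by rewrite divfK; [lra | rewrite -mulr2n mulrn_eq0].
have := form_ge0 b (- a).
rewrite (_ : _ + _ = a * (a * c - b ^+ 2)); last by ring.
by rewrite pmulr_rge0 // subr_ge0.
Qed.

Section PositiveSemidefinite.

Context {R : realType} {n : nat} {W : 'M[R]_n} (psdW : psd W).

Lemma psd_form_delta2_ge0 i j u v :
  0 <= u ^+ 2 * W i i + u * v * (W i j + W i j) + v ^+ 2 * W j j.
Proof.
have [symW form_ge0] := psdW.
have Wji : W j i = W i j by rewrite -{1}symW mxE.
by have := form_ge0 (u *: delta_mx i 0 + v *: delta_mx j 0); rewrite quad_form_delta2 Wji.
Qed.

Lemma psd_diag_ge0 i : 0 <= W i i.
Proof. by have := psd_form_delta2_ge0 i i 1 0; lra. Qed.

Lemma psd_sqr_le i j : W i j ^+ 2 <= W i i * W j j.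
Proof. exact/binary_form_ge0_sqr_le/psd_form_delta2_ge0. Qed.

Lemma psd_norm_le_sqrt i j : `|W i j| <= Num.sqrt (W i i * W j j).
Proof.
by rewrite -sqrtr_sqr ler_sqrt ?psd_sqr_le // mulr_ge0 ?psd_diag_ge0.
Qed.

End PositiveSemidefinite.

(* Since 0^-1 = 0, a zero diagonal entry W_ii zeroes out row and column i. *)
Definition diag_balance {R : rcfType} {n} (W : 'M[R]_n) : 'M[R]_n :=
  let D := diag_mx (\row_i (Num.sqrt (Num.sqrt (W i i)))^-1) in D *m W *m D.

Section DiagBalance.

Context {R : rcfType} {n : nat} {W : 'M[R]_n}.
Let q i := Num.sqrt (Num.sqrt (W i i)).

Lemma diag_balanceE i j : diag_balance W i j = W i j / (q i * q j).
Proof.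
by rewrite /diag_balance mul_mx_diag mxE mul_diag_mx !mxE /q invfM mulrA (mulrC _ (W i j)).
Qed.

Lemma mxrank_diag_balance : (\rank (diag_balance W) <= \rank W)%N.
Proof. exact: leq_trans (mxrankM_maxl _ _) (mxrankM_maxr _ _). Qed.

Lemma sqr_quartic_root i : q i ^+ 2 = Num.sqrt (W i i).
Proof. by rewrite sqr_sqrtr ?sqrtr_ge0. Qed.

End DiagBalance.

Lemma mxtrace_diag_balance {R : realType} {n} {W : 'M[R]_n} :
  psd W -> \tr (diag_balance W) = \sum_i Num.sqrt (W i i).
Proof.
move=> psdW; apply: eq_bigr => i _; rewrite diag_balanceE -expr2 sqr_quartic_root.
have [->|s_neq0] := eqVneq (Num.sqrt (W i i)) 0; first by rewrite invr0 mulr0.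
by rewrite -{1}(sqr_sqrtr (psd_diag_ge0 psdW i)) expr2 mulfK.
Qed.

Lemma sum_sqr_diag_balance_le {R : realType} {n} {W : 'M[R]_n} :
  psd W -> \sum_i \sum_j diag_balance W i j ^+ 2 <= \sum_i \sum_j `|W i j|.
Proof.
move=> psdW.
have sqr_div_le (x t : R) : 0 <= x <= t -> x ^+ 2 / t <= x.
  case/andP=> x_ge0 x_le_t; have [->|t_neq0] := eqVneq t 0; first by rewrite invr0 mulr0.
  have t_gt0 : 0 < t by rewrite lt_def t_neq0 (le_trans x_ge0).
  by rewrite expr2 -mulrA ler_piMr // ler_pdivrMr ?mul1r.
apply: ler_sum => i _; apply: ler_sum => j _.
rewrite diag_balanceE expr_div_n exprMn !sqr_quartic_root -sqrtrM ?(psd_diag_ge0 psdW) //.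
by rewrite -real_normK ?num_real // sqr_div_le ?normr_ge0 ?(psd_norm_le_sqrt psdW).
Qed.

Theorem proposition2 (R : realType) (d : nat) (W : 'M[R]_d) (k : R) (r : nat) :
  psd W ->
  \tr W = 1 ->
  \sum_(i < d) \sum_(j < d) `|W i j| <= k ->
  \rank W = r ->
  \sum_(i < d) Num.sqrt (W i i) <= Num.sqrt (r%:R * k).
Proof.
move=> psdW _ sum_le_k rankW.
set S := \sum_i Num.sqrt (W i i); set A := diag_balance W.
have frob_ge0 : 0 <= \sum_i \sum_j A i j ^+ 2.
  by apply: sumr_ge0 => i _; apply: sumr_ge0 => j _; apply: sqr_ge0.
have S2_le : S ^+ 2 <= r%:R * k.
  rewrite /S -(mxtrace_diag_balance psdW); apply: le_trans (sqr_mxtrace_le_rank A) _.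
  apply: ler_pM => //; first by rewrite ler_nat -rankW mxrank_diag_balance.
  exact: le_trans (sum_sqr_diag_balance_le psdW) sum_le_k.
have S_ge0 : 0 <= S by apply: sumr_ge0 => i _; apply: sqrtr_ge0.
by rewrite -(ger0_norm S_ge0) -sqrtr_sqr ler_sqrt // (le_trans (sqr_ge0 S)).
Qed.
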